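(* Let $n$ be an odd prime and let $k_1,k_2\in\mathbb{Z}$ be such that $\sin\big(\frac{k_2\pi}{n}\big)\neq0$. Then $$\frac{\sin\big(\frac{k_1\pi}{n}\big)}{\sin\big(\frac{k_2\pi}{n}\big)}$$ is either $-1$, $0$, $1$, or irrational. *)

From Stdlib Require Import Reals ZArith Znumtheory.
Open Scope R_scope.

Definition is_rational (x : R) : Prop :=
  exists p q : Z, q <> 0%Z /\ x = IZR p / IZR q.

(* Write theta = 2 pi / N.  Since 2 is invertible modulo the odd number N,
   every sin (k pi / N) equals +- sin (j theta) with 0 <= j < N.  With
   zeta = exp (i theta), the value 2 i sin (j theta) is obtained by evaluating
   X^j - X^(N-j) at zeta, so a rational relation sin (j1 theta) = c sin (j2 theta)
   gives a rational polynomial of degree < N without constant term vanishing at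
   zeta.  For N prime, 1 + X + ... + X^(N-1) is the (irreducible) minimal
   polynomial of zeta, so this polynomial is zero, and comparing coefficients
   forces j2 = j1 or j2 = N - j1, i.e. c = +-1 (or sin (j1 theta) = 0). *)

From Stdlib Require Import Reals ZArith Znumtheory Lia Lra Classical_Prop.
From mathcomp Require Import all_boot all_algebra all_field.
From mathcomp Require Import Rstruct complex ssrZ zify.
Import GRing.Theory Num.Theory.

Set Implicit Arguments.
Unset Strict Implicit.
Unset Printing Implicit Defensive.

Open Scope R_scope.

Lemma Rabs_eq_Rabs_cases (x y : R) : Rabs x = Rabs y -> x = y \/ x = - y.
Proof. by rewrite /Rabs; case: Rcase_abs; case: Rcase_abs => *; lra. Qed.

Lemma Rabs_sin_add_IZR_PI (x : R) (t : Z) :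
  Rabs (sin (x + IZR t * PI)) = Rabs (sin x).
Proof.
have sin_tPI : sin (IZR t * PI) = 0 by apply: sin_eq_0_1; exists t.
have cos_tPI : cos (IZR t * PI) = 1 \/ cos (IZR t * PI) = -1.
  by have := sin2_cos2 (IZR t * PI); rewrite sin_tPI /Rsqr; nra.
rewrite sin_plus sin_tPI Rmult_0_r Rplus_0_r Rabs_mult; case: cos_tPI => ->.
- by rewrite Rabs_R1 Rmult_1_r.
- by rewrite Rabs_Ropp Rabs_R1 Rmult_1_r.
Qed.

Definition theta (N : nat) : R := 2 * PI / INR N.

Lemma INR_mul_theta N : (0 < N)%N -> INR N * theta N = 2 * PI.
Proof. by move=> N_gt0; rewrite /theta; field; apply: not_0_INR; lia. Qed.

Lemma theta_sub N j : (0 < N)%N -> (j <= N)%N ->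
  INR (N - j) * theta N = 2 * PI - INR j * theta N.
Proof.
by move=> N_gt0 j_le; rewrite minus_INR ?Rmult_minus_distr_r ?INR_mul_theta //; lia.
Qed.

Lemma sin_theta_sub N j : (0 < N)%N -> (j <= N)%N ->
  sin (INR (N - j) * theta N) = - sin (INR j * theta N).
Proof. by move=> *; rewrite theta_sub // sin_minus sin_2PI cos_2PI; ring. Qed.

Lemma cos_theta_sub N j : (0 < N)%N -> (j <= N)%N ->
  cos (INR (N - j) * theta N) = cos (INR j * theta N).
Proof. by move=> *; rewrite theta_sub // cos_minus sin_2PI cos_2PI; ring. Qed.

Lemma sin_theta_gt0 N : (3 <= N)%N -> 0 < sin (theta N).
Proof.
move=> N_ge3; have N_gt2 : 2 < INR N by apply: (lt_INR 2); lia.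
have := PI_RGT_0; rewrite /theta => PI_gt0; apply: sin_gt_0.
- by apply: Rdiv_lt_0_compat; lra.
- have : / INR N < / 2 by apply: Rinv_lt_contravar; nra.
  by rewrite /Rdiv; nra.
Qed.

Section OddModulus.
Local Open Scope Z_scope.

Lemma odd_Z_decomp (n k : Z) : 0 < n -> Z.odd n = true ->
  exists m t : Z, 0 <= m < n /\ k = 2 * m + n * t.
Proof.
move=> n_gt0 /Z.odd_spec[u n_eq].
(* u + 1 = (n + 1) / 2 is the inverse of 2 modulo n. *)
have := Z.div_mod (k * (u + 1)) n; have := Z.mod_pos_bound (k * (u + 1)) n n_gt0.
set m := Z.modulo _ _; set d := Z.div _ _ => m_bnd kh_eq.
by exists m, (2 * d - k); split; [| nia].
Qed.

End OddModulus.

Lemma Rabs_sin_IZR_PI_div_odd (n k : Z) : Z.lt 0 n -> Z.odd n = true ->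
  exists j : nat, (j < Z.to_nat n)%N /\
    Rabs (sin (IZR k * PI / IZR n)) = Rabs (sin (INR j * theta (Z.to_nat n))).
Proof.
move=> n_gt0 n_odd; have [m [t [m_bnd ->]]] := odd_Z_decomp k n_gt0 n_odd.
exists (Z.to_nat m); split; first by lia.
rewrite /theta !INR_IZR_INZ !Z2Nat.id; try lia.
have -> : IZR (2 * m + n * t) * PI / IZR n = IZR m * (2 * PI / IZR n) + IZR t * PI.
  by rewrite plus_IZR !mult_IZR; field; apply: not_0_IZR; lia.
exact: Rabs_sin_add_IZR_PI.
Qed.

Section GeometricPoly.
Local Open Scope ring_scope.

Lemma irredp_dvdp_root (F : fieldType) (E : idomainType) (f : {rmorphism F -> E})
    (p q : {poly F}) (z : E) :
  irreducible_poly p -> root (map_poly f p) z -> root (map_poly f q) z -> p %| q.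
Proof.
move=> p_irr pz qz.
have g_root : root (map_poly f (gcdp p q)) z by rewrite gcdp_map root_gcd pz.
have g_neq0 : gcdp p q != 0 by rewrite gcdp_eq0 negb_and irredp_neq0.
have g_size : size (gcdp p q) != 1%N.
  by rewrite -(size_map_poly f) neq_ltn orbC (root_size_gt1 _ g_root) // map_poly_eq0.
by rewrite -(eqp_dvdl _ (p_irr _ g_size (dvdp_gcdl p q))) dvdp_gcdr.
Qed.

Lemma prim_root_prime (R : idomainType) p (z : R) :
  prime p -> z ^+ p = 1 -> z != 1 -> p.-primitive_root z.
Proof.
move=> p_prime zp z_neq1.
have [m m_prim m_dvd] := prim_order_exists (prime_gt0 p_prime) zp.
case/primeP: p_prime => _ /(_ m m_dvd) /orP[/eqP m1 | /eqP <- //].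
move: m_prim z_neq1; rewrite m1 => /prim_expr_order; rewrite expr1 => ->.
by rewrite eqxx.
Qed.

Definition geometric_poly (p : nat) : {poly rat} := \poly_(i < p) 1.

Lemma size_geometric_poly p : size (geometric_poly p) = p.
Proof. by rewrite size_poly_eq // oner_eq0. Qed.

Lemma geometric_poly_neq0 p : (0 < p)%N -> geometric_poly p != 0.
Proof. by rewrite -size_poly_eq0 size_geometric_poly -lt0n. Qed.

Lemma horner_geometric_poly (F : numFieldType) p (z : F) :
  (map_poly ratr (geometric_poly p)).[z] = \sum_(i < p) z ^+ i.
Proof.
rewrite horner_coef size_map_poly size_geometric_poly.
by apply: eq_bigr => i _; rewrite coef_map coef_poly ltn_ord [_ 1]rmorph1 mul1r.
Qed.

Lemma root_geometric_poly (F : numFieldType) p (z : F) : (0 < p)%N ->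
  root (map_poly ratr (geometric_poly p)) z = (z ^+ p == 1) && (z != 1).
Proof.
move=> p_gt0; rewrite rootE horner_geometric_poly.
have [->|z_neq1] := eqVneq z 1.
  rewrite andbF (eq_bigr (fun=> 1)) => [|i _]; last exact: expr1n.
  by rewrite sumr_const card_ord pnatr_eq0 eqn0Ngt p_gt0.
by rewrite andbT -[z ^+ p == 1]subr_eq0 subrX1 mulf_eq0 subr_eq0 (negbTE z_neq1).
Qed.

Lemma geometric_poly_irreducible p : prime p -> irreducible_poly (geometric_poly p).
Proof.
move=> p_prime; have p_gt0 := prime_gt0 p_prime.
split=> [|d d_size d_dvd]; first by rewrite size_geometric_poly prime_gt1.
have d_neq0 : d != 0.
  by apply: contraTneq d_dvd => ->; rewrite dvd0p geometric_poly_neq0.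
have [w w_root] : exists w : algC, root (map_poly ratr d) w.
  by apply/closed_rootP; rewrite size_map_poly.
have : root (map_poly ratr (geometric_poly p)) w.
  by apply: root_dvdp w_root; rewrite dvdp_map.
rewrite root_geometric_poly // => /andP[/eqP w_p w_neq1].
have w_prim := prim_root_prime p_prime w_p w_neq1.
have [m [Dm _] m_dvd] := minCpolyP w.
have m_size : size m = p.
  rewrite -(size_map_poly (@ratr algC)) -Dm (minCpoly_cyclotomic w_prim).
  by rewrite size_cyclotomic totient_prime // prednK.
rewrite -dvdp_size_eqp // size_geometric_poly eqn_leq.
rewrite -{1}(size_geometric_poly p) dvdp_leq ?geometric_poly_neq0 //=.
by rewrite -m_size dvdp_leq // -m_dvd.
Qed.

Lemma geometric_poly_dvd_eq0 p (q : {poly rat}) : (0 < p)%N ->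
  geometric_poly p %| q -> (size q <= p)%N -> q`_0 = 0 -> q = 0.
Proof.
move=> p_gt0 /dvdpP[r ->] q_size q0.
have [->|r_neq0] := eqVneq r 0; first by rewrite mul0r.
have /size1_polyC Dr : (size r <= 1)%N.
  move: q_size; rewrite size_mul ?geometric_poly_neq0 // size_geometric_poly.
  by rewrite -ltnS prednK ?addn_gt0 ?p_gt0 ?orbT // -add1n leq_add2r.
move: q0; rewrite Dr coefCM coef_poly p_gt0 mulr1 => ->.
by rewrite mul0r.
Qed.

End GeometricPoly.

Section RootOfUnity.
Local Open Scope ring_scope.
Local Open Scope complex_scope.

Definition zeta (N : nat) : R[i] := cos (theta N) +i* sin (theta N).

Lemma zeta_exp N k : zeta N ^+ k = cos (INR k * theta N) +i* sin (INR k * theta N).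
Proof.
elim: k => [|k IHk]; first by rewrite expr0 Rmult_0_l cos_0 sin_0.
rewrite exprSr IHk S_INR Rmult_plus_distr_r Rmult_1_l cos_plus sin_plus.
by simpc; congr (_ +i* _); rewrite addrC.
Qed.

Definition sin_poly (N j : nat) : {poly rat} := 'X^j - 'X^(N - j).

Lemma horner_sin_poly_zeta N j : (0 < N)%N -> (j <= N)%N ->
  (map_poly ratr (sin_poly N j)).[zeta N] = (sin (INR j * theta N) *+ 2)*i.
Proof.
move=> N_gt0 j_le.
rewrite rmorphB /= !map_polyXn hornerD hornerN !hornerXn !zeta_exp.
by rewrite sin_theta_sub // cos_theta_sub //; simpc; rewrite mulr2n.
Qed.

Lemma size_sin_poly N j : (0 < j < N)%N -> (size (sin_poly N j) <= N)%N.
Proof.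
move=> /andP[j_gt0 j_lt]; apply: leq_trans (size_polyD _ _) _.
rewrite size_polyN geq_max !size_polyXn j_lt ltn_subrL j_gt0.
exact: ltn_trans j_gt0 j_lt.
Qed.

Lemma sin_poly_coef0 N j : (0 < j < N)%N -> (sin_poly N j)`_0 = 0.
Proof.
move=> /andP[j_gt0 j_lt].
by rewrite coefB !coefXn !(eq_sym 0%N) !eqn0Ngt j_gt0 subn_gt0 j_lt subrr.
Qed.

Lemma root_geometric_poly_zeta N : (3 <= N)%N ->
  root (map_poly ratr (geometric_poly N)) (zeta N).
Proof.
move=> N_ge3; have N_gt0 : (0 < N)%N by apply: leq_trans N_ge3.
rewrite root_geometric_poly // zeta_exp INR_mul_theta // cos_2PI sin_2PI eqxx /=.
by apply/eqP => -[_ sin0]; have := sin_theta_gt0 N_ge3; rewrite sin0 => /Rlt_irrefl.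
Qed.

Lemma sin_theta_rat_dependent N (c : rat) j1 j2 : prime N -> odd N ->
  (0 < j1 < N)%N -> (0 < j2 < N)%N ->
  sin (INR j1 * theta N) = ratr c * sin (INR j2 * theta N) ->
  j2 = j1 \/ j2 = (N - j1)%N.
Proof.
move=> N_prime N_odd j1_bnd j2_bnd S_eq.
have N_ge3 : (3 <= N)%N.
  by move: (prime_gt1 N_prime) N_odd; case: N {j1_bnd j2_bnd S_eq N_prime} => [|[|[]]].
have N_gt0 : (0 < N)%N by apply: leq_trans N_ge3.
pose q := sin_poly N j1 - c%:P * sin_poly N j2.
have q_root : root (map_poly ratr q) (zeta N).
  rewrite rootE rmorphB rmorphM /= map_polyC hornerD hornerN hornerM hornerC.
  have [j1_le j2_le] : (j1 <= N)%N /\ (j2 <= N)%N.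
    by case/andP: j1_bnd => _ /ltnW; case/andP: j2_bnd => _ /ltnW.
  rewrite !horner_sin_poly_zeta // S_eq.
  rewrite [X in _ - X * _](_ : _ = (ratr c)%:C); last by rewrite fmorph_rat.
  by simpc; rewrite mulrnAr subrr.
have q_eq0 : q = 0.
  apply: geometric_poly_dvd_eq0 N_gt0 _ _ _.
  - exact: irredp_dvdp_root (geometric_poly_irreducible N_prime)
      (root_geometric_poly_zeta N_ge3) q_root.
  - apply: leq_trans (size_polyD _ _) _.
    rewrite size_polyN geq_max size_sin_poly // mul_polyC.
    exact: leq_trans (size_scale_leq _ _) (size_sin_poly j2_bnd).
  - by rewrite coefB coefCM !sin_poly_coef0 // mulr0 subrr.
have j1_compl : (j1 == N - j1)%N = false.
  apply/eqP => j1_eq; move: N_odd.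
  by rewrite -(subnK (ltnW (proj2 (andP j1_bnd)))) -j1_eq addnn odd_double.
have [<-|j12] := eqVneq j1 j2; first by left.
have [j1_eq|j1_neq] := eqVneq j1 (N - j2)%N; first by right; lia.
move/eqP: (congr1 (coefp j1) q_eq0); rewrite /= coefB coefCM !coefB !coefXn.
by rewrite eqxx (negbTE j12) (negbTE j1_neq) j1_compl coef0 !subr0 mulr0 subr0 oner_eq0.
Qed.

End RootOfUnity.

Lemma sin_theta_rat_ratio N (c : rat) j1 j2 : prime N -> odd N ->
  (j1 < N)%N -> (j2 < N)%N -> sin (INR j2 * theta N) <> 0 ->
  Rabs (sin (INR j1 * theta N)) = Rabs (ratr c * sin (INR j2 * theta N)) ->
  ratr c = -1 \/ ratr c = 0 \/ ratr c = 1.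
Proof.
move=> N_prime N_odd j1_lt j2_lt S2_neq0 S_abs.
have absS2_neq0 := Rabs_no_R0 _ S2_neq0.
have j2_gt0 : (0 < j2)%N.
  by move: S2_neq0; case: (j2) => //=; rewrite Rmult_0_l sin_0.
have [j1_0 | j1_gt0] := posnP j1.
  move: S_abs; rewrite j1_0 Rmult_0_l sin_0 Rabs_R0 Rabs_mult.
  by move=> /esym/Rmult_integral[|//]; rewrite RabsE => /normr0_eq0; right; left.
have [c' S_eq] : exists c' : rat,
    sin (INR j1 * theta N) = ratr c' * sin (INR j2 * theta N).
  case: (Rabs_eq_Rabs_cases S_abs) => ->.
  - by exists c.
  - by exists (- c)%R; rewrite rmorphN Ropp_mult_distr_l.
have S_abs12 : Rabs (sin (INR j2 * theta N)) = Rabs (sin (INR j1 * theta N)).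
  have [j1_bnd j2_bnd] : (0 < j1 < N)%N /\ (0 < j2 < N)%N.
    by rewrite j1_gt0 j2_gt0 j1_lt j2_lt.
  have N_gt0 : (0 < N)%N by apply: ltn_trans j2_gt0 j2_lt.
  case: (sin_theta_rat_dependent N_prime N_odd j1_bnd j2_bnd S_eq) => ->//.
  by rewrite sin_theta_sub ?Rabs_Ropp // ltnW.
move: S_abs; rewrite -S_abs12 Rabs_mult -{1}(Rmult_1_l (Rabs _)).
move=> /Rmult_eq_reg_r/(_ absS2_neq0) abs_c.
have /Rabs_eq_Rabs_cases[->|->] : Rabs (ratr c) = Rabs 1 by rewrite Rabs_R1.
- by right; right.
- by left.
Qed.

Lemma IZR_int_of_Z (z : Z) : IZR z = ((int_of_Z z)%:~R)%R.
Proof.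
have IZR_pos p : IZR (Z.pos p) = ((Pos.to_nat p)%:R)%R.
  by rewrite IZRposE INRE Pos_to_natE.
case: z => [|p|p]; [by [] | exact: IZR_pos |].
rewrite [int_of_Z _]/= NegzE prednK; last by lia.
by rewrite -[Z.neg p]/(Z.opp (Z.pos p)) opp_IZR IZR_pos mulrNz.
Qed.

Lemma is_rational_ratr (x : R) : is_rational x -> exists c : rat, x = ratr c.
Proof.
case=> p [q [_ ->]]; exists ((int_of_Z p)%:~R / (int_of_Z q)%:~R)%R.
by rewrite fmorph_div !rmorph_int -!IZR_int_of_Z.
Qed.

Lemma prime_Z_to_nat (n : Z) : Znumtheory.prime n -> prime (Z.to_nat n).
Proof.
move=> n_prime; have n_ge2 := prime_ge_2 _ n_prime.
apply/primeP; split; first by lia.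
move=> d /dvdnP[k n_eq]; have d_dvd : Z.divide (Z.of_nat d) n.
  by exists (Z.of_nat k); lia.
by case: (prime_divisors _ n_prime _ d_dvd) => ?; apply/orP; lia.
Qed.

Lemma odd_Z_to_nat (n : Z) : Z.lt 0 n -> Z.odd n = true -> odd (Z.to_nat n).
Proof.
move=> n_gt0 /Z.odd_spec[u n_eq].
have -> : Z.to_nat n = (2 * Z.to_nat u).+1 by lia.
by rewrite oddS oddM.
Qed.

Theorem corollary6 (n : Z) (k1 k2 : Z) :
  Znumtheory.prime n -> Z.odd n = true ->
  sin (IZR k2 * PI / IZR n) <> 0 ->
  let r := sin (IZR k1 * PI / IZR n) / sin (IZR k2 * PI / IZR n) in
  r = -1 \/ r = 0 \/ r = 1 \/ ~ is_rational r.
Proof.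
move=> n_prime n_odd s2_neq0 r.
have n_gt0 : Z.lt 0 n by have := prime_ge_2 _ n_prime; lia.
have [/is_rational_ratr[c r_eq] | r_irr] := classic (is_rational r);
  last by right; right; right.
have [j1 [j1_lt abs_s1]] := Rabs_sin_IZR_PI_div_odd k1 n_gt0 n_odd.
have [j2 [j2_lt abs_s2]] := Rabs_sin_IZR_PI_div_odd k2 n_gt0 n_odd.
have S2_neq0 : sin (INR j2 * theta (Z.to_nat n)) <> 0.
  move=> S2_0; apply: s2_neq0.
  by move: abs_s2; rewrite S2_0 Rabs_R0 RabsE => /normr0_eq0.
have abs_S1 : Rabs (sin (INR j1 * theta (Z.to_nat n))) =
              Rabs (ratr c * sin (INR j2 * theta (Z.to_nat n))).
  by rewrite Rabs_mult -abs_s1 -abs_s2 -r_eq -Rabs_mult /r; congr Rabs; field.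
have := sin_theta_rat_ratio (prime_Z_to_nat n_prime) (odd_Z_to_nat n_gt0 n_odd)
  j1_lt j2_lt S2_neq0 abs_S1.
by rewrite -r_eq; tauto.
Qed.
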